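(* Let $R>0$, $n\in\mathbb N$, $Q,K,V\in\mathbb R^{k\times d}$, $A:=K^\top Q/\sqrt k$, let $f$ be self-attention with parameters $(A,V)$ and $F$ mean-field self-attention with parameters $(A,V)$. Then $$\mathrm{Lip}^{\|\cdot\|_F}\big(f_{|B_R^n}\big)\le\mathrm{Lip}^{W_2}\big(F_{|\mathcal P(B_R)}\big).$$
   Context: For $X=(x_1,\dots,x_n)\in(\mathbb R^d)^n$, $f(X)=\big(V\sum_{j=1}^nP_{ij}x_j\big)_{1\le i\le n}$ with $P_{ij}=\exp(x_i^\top A^\top x_j)/\sum_{l=1}^n\exp(x_i^\top A^\top x_l)$; $\mathrm{Lip}^{\|\cdot\|_F}(f_{|\mathcal X})=\sup_{X\ne Y\in\mathcal X}\|f(X)-f(Y)\|_F/\|X-Y\|_F$ with $\|X\|_F=(\sum_i|x_i|^2)^{1/2}$. $B_R\subset\mathbb R^d$ is the closed ball of center 0 and radius $R$ and $\mathcal P(B_R)$ the set of probability measures supported in $B_R$. Mean-field self-attention: $F(\mu):=(\Gamma_\mu)_\sharp\mu$ with $\Gamma_\mu(x)=\int\exp(x^\top A^\top y)Vy\,d\mu(y)/\int\exp(x^\top A^\top y)d\mu(y)$ and $\sharp$ the pushforward. $W_2$ is the 2-Wasserstein distance and $\mathrm{Lip}^{W_2}(F_{|\mathcal X})=\sup_{\mu\ne\nu\in\mathcal X}W_2(F(\mu),F(\nu))/W_2(\mu,\nu)$. *)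

From HB Require Import structures.
From mathcomp Require Import all_boot all_order all_algebra.
From mathcomp Require Import all_classical all_reals all_analysis.

Set Implicit Arguments.
Unset Strict Implicit.
Unset Printing Implicit Defensive.

Import Order.TTheory GRing.Theory Num.Theory.
Import numFieldNormedType.Exports.

Local Open Scope classical_set_scope.
Local Open Scope ring_scope.

(* Points of R^m are represented as m.-tuple R, which MathComp-Analysis
   equips with the product (= Borel) sigma-algebra. *)
Section Defs.
Variable R : realType.

Definition sqnorm m (x : m.-tuple R) : R := \sum_(i < m) tnth x i ^+ 2.
Definition tocv m (x : m.-tuple R) : 'cV[R]_m := \col_(i < m) tnth x i.
Definition ofcv m (c : 'cV[R]_m) : m.-tuple R := [tuple c i 0 | i < m].

Definition ballB m (r : R) : set (m.-tuple R) := [set x | sqnorm x <= r ^+ 2].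

Definition attnA k d (Q K : 'M[R]_(k, d)) : 'M[R]_d :=
  (Num.sqrt (k%:R))^-1 *: (K^T *m Q).

Definition bil d (A : 'M[R]_d) (x y : d.-tuple R) : R :=
  ((tocv x)^T *m A^T *m tocv y) 0 0.

Definition applyV k d (V : 'M[R]_(k, d)) (y : d.-tuple R) : k.-tuple R :=
  ofcv (V *m tocv y).

Definition Pij n d (A : 'M[R]_d) (X : 'I_n -> d.-tuple R) (i j : 'I_n) : R :=
  expR (bil A (X i) (X j)) / \sum_(l < n) expR (bil A (X i) (X l)).

Definition selfattn n k d (A : 'M[R]_d) (V : 'M[R]_(k, d))
  (X : 'I_n -> d.-tuple R) : 'I_n -> k.-tuple R :=
  fun i => ofcv (V *m \sum_(j < n) (Pij A X i j *: tocv (X j))).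

Definition frob n m (X : 'I_n -> m.-tuple R) : R :=
  Num.sqrt (\sum_(i < n) sqnorm (X i)).

Definition subX n m (X Y : 'I_n -> m.-tuple R) : 'I_n -> m.-tuple R :=
  fun i => [tuple tnth (X i) j - tnth (Y i) j | j < m].

(* Lip^{||.||_F}(f restricted to Xs); Lipschitz constants are >= 0, hence
   the 0 in the supremum (it only matters when Xs has < 2 points). *)
Definition LipF n m p (f : ('I_n -> m.-tuple R) -> ('I_n -> p.-tuple R))
  (Xs : set ('I_n -> m.-tuple R)) : \bar R :=
  ereal_sup ([set 0%E] `|`
    [set r | exists X Y, [/\ Xs X, Xs Y, X <> Y &
       r = (frob (subX (f X) (f Y)) / frob (subX X Y))%:E]]).

Definition Gamma k d (A : 'M[R]_d) (V : 'M[R]_(k, d))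
  (mu : probability (d.-tuple R) R) (x : d.-tuple R) : k.-tuple R :=
  [tuple (Rintegral mu setT (fun y => expR (bil A x y) * tnth (applyV V y) i)
          / Rintegral mu setT (fun y => expR (bil A x y))) | i < k].

Definition meanfield k d (A : 'M[R]_d) (V : 'M[R]_(k, d))
  (mu : probability (d.-tuple R) R) : set (k.-tuple R) -> \bar R :=
  pushforward mu (Gamma A V mu).

Definition is_coupling m (mu nu : set (m.-tuple R) -> \bar R)
  (pi : probability (m.-tuple R * m.-tuple R)%type R) : Prop :=
  forall A : set (m.-tuple R), measurable A ->
    pi (A `*` setT) = mu A /\ pi (setT `*` A) = nu A.

Definition sqdist m (z : m.-tuple R * m.-tuple R) : R :=
  \sum_(i < m) (tnth z.1 i - tnth z.2 i) ^+ 2.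

Definition W2sq m (mu nu : set (m.-tuple R) -> \bar R) : \bar R :=
  ereal_inf [set (\int[pi]_z (sqdist z)%:E)%E
              | pi in [set pi | is_coupling mu nu pi]].

(* square root on [0, +oo] (never applied to negative values here) *)
Definition sqrte (x : \bar R) : \bar R :=
  match x with
  | r%:E => (Num.sqrt r)%:E
  | +oo%E => +oo%E
  | -oo%E => 0%E
  end.

Definition W2 m (mu nu : set (m.-tuple R) -> \bar R) : \bar R :=
  sqrte (W2sq mu nu).

(* quotient a / b in [0, +oo] for b > 0 (conventions x/+oo = 0 for finite x,
   +oo/b = +oo); only used with b = W2 mu nu, mu <> nu. *)
Definition edivp (a b : \bar R) : \bar R :=
  match a, b with
  | r%:E, s%:E => (r / s)%:E
  | r%:E, _ => 0%E
  | _, _ => +oo%E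
  end.

Definition supported_in m (r : R) (mu : probability (m.-tuple R) R) : Prop :=
  mu (~` @ballB m r) = 0%E.

Definition LipW2 k d (r : R)
  (F : probability (d.-tuple R) R -> set (k.-tuple R) -> \bar R) : \bar R :=
  ereal_sup ([set 0%E] `|`
    [set e | exists mu nu : probability (d.-tuple R) R,
       [/\ supported_in r mu, supported_in r nu,
           (mu : set _ -> \bar R) <> nu &
           e = edivp (W2 (F mu) (F nu)) (W2 mu nu)]]).

End Defs.

From Pilot Require Import Defs.
From HB Require Import structures.
From mathcomp Require Import all_boot all_order all_algebra.
From mathcomp Require Import all_classical all_reals all_analysis.
From mathcomp Require Import measurable_realfun.
From mathcomp Require Import ring lra.
Import Order.TTheory GRing.Theory Num.Theory.
Import numFieldNormedType.Exports.
Set Implicit Arguments.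
Unset Strict Implicit.
Unset Printing Implicit Defensive.
Local Open Scope classical_set_scope.
Local Open Scope ring_scope.

(* The mean-field map sends the empirical measure of a configuration [X] to
   the empirical measure of [f X].  When every point of [Y] lies within half
   the gap separating the matching point of [X] from the other points of [X],
   the diagonal coupling of the two empirical measures is optimal (the
   potential "squared distance to the nearest point of [X]" certifies it), so
   their [W2] distance is the Frobenius distance divided by [sqrt n].  This
   holds for all nearby pairs on the segment [s |-> X + s (Y - X)], which stays
   in [B_R^n] and along which [f] is continuous; so [s |-> f (X + s (Y - X))]
   is locally [Lip^W2]-Lipschitz, and a continuous induction on [[0, 1]] turns
   this into the global bound between [f X] and [f Y]. *)

Section Euclidean.
Variable R : realType.

Lemma lagrange_identity (I : finType) (u v : I -> R) :
  \sum_i \sum_j (u i * v j - u j * v i) ^+ 2 =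
  2 * ((\sum_i u i ^+ 2) * (\sum_i v i ^+ 2)) - 2 * (\sum_i u i * v i) ^+ 2.
Proof.
have expand i j : (u i * v j - u j * v i) ^+ 2 =
    u i ^+ 2 * v j ^+ 2 + u j ^+ 2 * v i ^+ 2 - 2 * ((u i * v i) * (u j * v j)).
  by ring.
under eq_bigr do under eq_bigr do rewrite expand.
under eq_bigr do rewrite sumrB big_split /=.
rewrite sumrB big_split /=.
have -> : \sum_i \sum_j u i ^+ 2 * v j ^+ 2 = (\sum_i u i ^+ 2) * (\sum_i v i ^+ 2).
  by rewrite mulr_suml; apply: eq_bigr => i _; rewrite mulr_sumr.
have -> : \sum_i \sum_j u j ^+ 2 * v i ^+ 2 = (\sum_i u i ^+ 2) * (\sum_i v i ^+ 2).
  rewrite mulrC mulr_suml; apply: eq_bigr => i _; rewrite mulr_sumr.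
  by apply: eq_bigr => j _; rewrite mulrC.
have -> : \sum_i \sum_j 2 * ((u i * v i) * (u j * v j)) = 2 * (\sum_i u i * v i) ^+ 2.
  rewrite expr2 mulr_suml mulr_sumr; apply: eq_bigr => i _.
  by rewrite !mulr_sumr; apply: eq_bigr => j _; ring.
ring.
Qed.

Lemma cauchy_schwarz (I : finType) (u v : I -> R) :
  \sum_i u i * v i <= Num.sqrt (\sum_i u i ^+ 2) * Num.sqrt (\sum_i v i ^+ 2).
Proof.
rewrite -sqrtrM; last by apply: sumr_ge0 => i _; exact: sqr_ge0.
apply: le_trans (ler_norm _) _; rewrite -sqrtr_sqr; apply: ler_wsqrtr.
have := lagrange_identity u v.
have : 0 <= \sum_i \sum_j (u i * v j - u j * v i) ^+ 2.
  by apply: sumr_ge0 => i _; apply: sumr_ge0 => j _; exact: sqr_ge0.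
lra.
Qed.

Lemma minkowski (I : finType) (u v : I -> R) :
  Num.sqrt (\sum_i (u i + v i) ^+ 2) <=
  Num.sqrt (\sum_i u i ^+ 2) + Num.sqrt (\sum_i v i ^+ 2).
Proof.
have hu : 0 <= \sum_i u i ^+ 2 by apply: sumr_ge0 => i _; exact: sqr_ge0.
have hv : 0 <= \sum_i v i ^+ 2 by apply: sumr_ge0 => i _; exact: sqr_ge0.
rewrite -(ger0_norm (addr_ge0 (sqrtr_ge0 _) (sqrtr_ge0 _))) -sqrtr_sqr.
apply: ler_wsqrtr; rewrite sqrrD !sqr_sqrtr //.
have -> : \sum_i (u i + v i) ^+ 2 =
    \sum_i u i ^+ 2 + \sum_i v i ^+ 2 + 2 * \sum_i u i * v i.
  by rewrite mulr_sumr -!big_split /=; apply: eq_bigr => i _; ring.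
have := cauchy_schwarz u v; lra.
Qed.

Lemma sqdist_ge0 p (z : p.-tuple R * p.-tuple R) : 0 <= sqdist z.
Proof. by apply: sumr_ge0 => i _; exact: sqr_ge0. Qed.

Lemma sqdistC p (x y : p.-tuple R) : sqdist (x, y) = sqdist (y, x).
Proof. by apply: eq_bigr => i _; rewrite -sqrrN opprB. Qed.

Lemma sqdist_xx p (x : p.-tuple R) : sqdist (x, x) = 0.
Proof. by rewrite /sqdist big1 // => i _; rewrite subrr expr0n. Qed.

Lemma sqdist_eq0 p (x y : p.-tuple R) : sqdist (x, y) = 0 -> x = y.
Proof.
move=> /eqP; rewrite psumr_eq0; last by move=> i _; exact: sqr_ge0.
move=> /allP xy; apply: eq_from_tnth => i; apply/eqP.
by rewrite -subr_eq0 -sqrf_eq0; apply: (implyP (xy i (mem_index_enum i))).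
Qed.

Definition edist p (x y : p.-tuple R) := Num.sqrt (sqdist (x, y)).

Lemma edistC p (x y : p.-tuple R) : edist x y = edist y x.
Proof. by rewrite /edist sqdistC. Qed.

Lemma edist_triangle p (x y z : p.-tuple R) : edist x z <= edist x y + edist y z.
Proof.
have := minkowski (fun i => tnth x i - tnth y i) (fun i => tnth y i - tnth z i).
by rewrite /edist /sqdist; under eq_bigr do rewrite addrA subrK.
Qed.

Lemma le_sqdist p (x y x' y' : p.-tuple R) :
  edist x y <= edist x' y' -> sqdist (x, y) <= sqdist (x', y').
Proof. by rewrite /edist ler_sqrt // sqdist_ge0. Qed.

Definition lerp p (t : R) (x y : p.-tuple R) : p.-tuple R :=
  [tuple tnth x j + t * (tnth y j - tnth x j) | j < p].

Lemma ballB_convex p (r t : R) (x y : p.-tuple R) : 0 <= t <= 1 ->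
  ballB r x -> ballB r y -> ballB r (lerp t x y).
Proof.
rewrite /ballB /sqnorm /= => /andP[t0 t1] hx hy.
have norm_le (z : p.-tuple R) : \sum_i tnth z i ^+ 2 <= r ^+ 2 ->
    Num.sqrt (\sum_i tnth z i ^+ 2) <= `|r|.
  by move=> hz; rewrite -sqrtr_sqr ler_wsqrtr.
have scale (c : R) (z : p.-tuple R) :
    Num.sqrt (\sum_i (c * tnth z i) ^+ 2) = `|c| * Num.sqrt (\sum_i tnth z i ^+ 2).
  rewrite -(sqrtr_sqr c) -sqrtrM ?sqr_ge0 // mulr_sumr.
  by congr Num.sqrt; apply: eq_bigr => i _; rewrite exprMn.
have := minkowski (fun i => (1 - t) * tnth x i) (fun i => t * tnth y i).
rewrite !scale (ger0_norm t0) ger0_norm ?subr_ge0 //.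
have -> : \sum_i ((1 - t) * tnth x i + t * tnth y i) ^+ 2 =
    \sum_i tnth (lerp t x y) i ^+ 2.
  by apply: eq_bigr => i _; rewrite tnth_mktuple; congr (_ ^+ 2); ring.
have hx' := norm_le _ hx; have hy' := norm_le _ hy.
have sx := sqrtr_ge0 (\sum_i tnth x i ^+ 2).
have sy := sqrtr_ge0 (\sum_i tnth y i ^+ 2).
move=> hxy; have hz : Num.sqrt (\sum_i tnth (lerp t x y) i ^+ 2) <= `|r| by nra.
by rewrite -real_normK ?num_real // -ler_sqrt ?sqr_ge0 // sqrtr_sqr normr_id.
Qed.

End Euclidean.

Section Configurations.
Variables (R : realType) (n p : nat).
Implicit Types X Y Z : 'I_n -> p.-tuple R.

Definition fdist X Y := Num.sqrt (\sum_a sqdist (X a, Y a)).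

Lemma frob_subX X Y : frob (subX X Y) = fdist X Y.
Proof.
congr Num.sqrt; apply: eq_bigr => a _; apply: eq_bigr => j _.
by rewrite tnth_mktuple.
Qed.

Lemma fdistC X Y : fdist X Y = fdist Y X.
Proof. by congr Num.sqrt; apply: eq_bigr => a _; rewrite sqdistC. Qed.

Lemma fdist_triangle X Y Z : fdist X Z <= fdist X Y + fdist Y Z.
Proof.
have := minkowski (fun q : 'I_n * 'I_p => tnth (X q.1) q.2 - tnth (Y q.1) q.2)
                  (fun q : 'I_n * 'I_p => tnth (Y q.1) q.2 - tnth (Z q.1) q.2).
by under eq_bigr do rewrite addrA subrK; rewrite /fdist /sqdist !pair_bigA.
Qed.

Lemma fdist_gt0 X Y : X <> Y -> 0 < fdist X Y.
Proof.
move=> XY; rewrite sqrtr_gt0 lt_neqAle sumr_ge0 ?andbT; last first.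
  by move=> a _; exact: sqdist_ge0.
rewrite eq_sym psumr_eq0; last by move=> a _; exact: sqdist_ge0.
apply/allP => XYa; apply: XY; apply: funext => a; apply: sqdist_eq0; apply/eqP.
exact: (implyP (XYa a (mem_index_enum a))).
Qed.

Definition segm X Y (t : R) : 'I_n -> p.-tuple R := fun a => lerp t (X a) (Y a).

Lemma segm0 X Y : segm X Y 0 = X.
Proof.
by apply: funext => a; apply: eq_from_tnth => j; rewrite tnth_mktuple mul0r addr0.
Qed.

Lemma segm1 X Y : segm X Y 1 = Y.
Proof.
by apply: funext => a; apply: eq_from_tnth => j; rewrite tnth_mktuple mul1r addrC subrK.
Qed.

Lemma fdist_segm X Y s t : fdist (segm X Y s) (segm X Y t) = `|s - t| * fdist X Y.
Proof.
rewrite /fdist -sqrtr_sqr -sqrtrM ?sqr_ge0 // mulr_sumr; congr Num.sqrt.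
apply: eq_bigr => a _; rewrite /sqdist mulr_sumr; apply: eq_bigr => j _.
by rewrite !tnth_mktuple; ring.
Qed.

End Configurations.

Section EmpiricalMeasure.
Variables (R : realType) (dd : measure_display) (T : measurableType dd).
Local Open Scope ereal_scope.

Definition empm m (P : 'I_m.+1 -> T) : {measure set T -> \bar R} :=
  msum (fun k => @dirac _ T (P (inord k)) R) m.+1.
Arguments empm {m}.

(** The Dirac fallback of [mnormalize] is never used: [empm P] has mass [m+1]. *)
Definition emp m (P : 'I_m.+1 -> T) : probability T R :=
  mnormalize (empm P) (@dirac _ T (P ord0) R).
Arguments emp {m}.

Lemma empmE m (P : 'I_m.+1 -> T) A : empm P A = (\sum_i \1_A (P i))%:E.
Proof.
by rewrite /empm /msum -sumEFin; apply: eq_bigr => i _; rewrite inord_val.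
Qed.

Lemma empE m (P : 'I_m.+1 -> T) A :
  emp P A = ((\sum_i \1_A (P i)) / m.+1%:R)%:E.
Proof.
have massT : empm P setT = (m.+1%:R : R)%:E.
  rewrite empmE (eq_bigr (fun=> 1%R)) ?sumr_const ?card_ord //.
  by move=> i _; rewrite indicE in_setT.
by rewrite /emp /= /mnormalize massT eqe pnatr_eq0 /= empmE -EFinM.
Qed.

Lemma ge0_integral_emp m (P : 'I_m.+1 -> T) (g : T -> \bar R) :
  measurable_fun setT g -> (forall x, 0 <= g x) ->
  \int[emp P]_x g x = (\sum_i g (P i)) * (m.+1%:R^-1 : R)%:E.
Proof.
move=> mg g0.
have w0 : (0 <= (m.+1%:R^-1 : R))%R by rewrite invr_ge0.
rewrite (eq_measure_integral (mscale (NngNum w0) (empm P))); last first.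
  move=> A _ _; rewrite -[LHS]/(emp P A) empE.
  by transitivity ((m.+1%:R^-1 : R)%:E * empm P A); rewrite // empmE -EFinM mulrC.
rewrite ge0_integral_mscale // ge0_integral_measure_sum // muleC; congr (_ * _).
apply: eq_bigr => i _; rewrite integral_dirac // diracE in_setT mul1e.
by rewrite inord_val.
Qed.

Lemma integral_emp m (P : 'I_m.+1 -> T) (f : T -> R) :
  measurable_fun setT f ->
  \int[emp P]_x (f x)%:E = ((\sum_i f (P i)) / m.+1%:R)%:E.
Proof.
move=> mf; have mF : measurable_fun setT (EFin \o f) by apply/measurable_EFinP.
rewrite integralE !ge0_integral_emp //; last 2 first.
- exact: measurable_funeneg.
- exact: measurable_funepos.
under eq_bigr do rewrite funeposE /= -EFin_max.
under [X in _ - X * _]eq_bigr do rewrite funenegE /= -EFin_max.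
rewrite !sumEFin -!EFinM -EFinB -mulrBl -sumrB; congr EFin; congr (_ * _)%R.
apply: eq_bigr => i _.
by rewrite /Order.max /=; case: ifPn => h1; case: ifPn => h2; lra.
Qed.

Lemma Rintegral_emp m (P : 'I_m.+1 -> T) (f : T -> R) :
  measurable_fun setT f -> Rintegral (emp P) setT f = ((\sum_i f (P i)) / m.+1%:R)%R.
Proof. by move=> mf; rewrite /Rintegral integral_emp. Qed.

End EmpiricalMeasure.
Arguments emp {R dd T m}.

Section Couplings.
Variables (R : realType) (p : nat).
Local Notation T := (p.-tuple R).

Lemma measurable_set1_tuple (x : T) : measurable [set x].
Proof.
have -> : [set x] = \bigcap_(i in [set: 'I_p]) ((fun y : T => tnth y i) @^-1` [set tnth x i]).
  apply/seteqP; split => [y /= -> i _ //|y /= xy].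
  by apply: eq_from_tnth => i; exact: xy.
apply: fin_bigcap_measurable; first exact: finite_finset.
move=> i _; rewrite -[X in measurable X]setTI.
by apply: measurable_tnth => //; exact: measurable_set1.
Qed.

Lemma measurable_range_tuple (I : finType) (P : I -> T) : measurable (range P).
Proof.
rewrite -bigcup_imset1 /=.
apply: fin_bigcup_measurable; first exact: finite_finset.
by move=> a _; exact: measurable_set1_tuple.
Qed.

Lemma measurable_sqdist : measurable_fun setT (@sqdist R p).
Proof.
apply: measurable_sum => i; apply: measurable_funX; apply: measurable_funB.
- exact: measurableT_comp (measurable_tnth i) measurable_fst.
- exact: measurableT_comp (measurable_tnth i) measurable_snd.
Qed.

Lemma measurable_bigmin (I : finType) (f0 : T -> R) (f : I -> T -> R) :
  measurable_fun setT f0 -> (forall i, measurable_fun setT (f i)) ->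
  measurable_fun setT (fun x => \big[Order.min/f0 x]_i f i x).
Proof.
move=> mf0 mf; rewrite (_ : (fun x => _) = \big[(fun g h => g \min h)/f0]_i f i).
  by elim/big_ind: _ => // g h mg mh; exact: measurable_minr.
by apply: funext => x; elim/big_rec2: _ => // i y g _ ->.
Qed.

(** Weak Kantorovich duality: a nonnegative potential [beta] on the second
   marginal, dominated by the cost on the support [S] of the first marginal,
   bounds the transport cost of every coupling from below. *)
Lemma potential_le_coupling_cost (mu nu : probability T R) (S : set T)
    (beta : T -> R) (pi : probability (T * T)%type R) :
  measurable S -> mu (~` S) = 0%E -> is_coupling mu nu pi ->
  measurable_fun setT beta -> (forall v, 0 <= beta v) ->
  (forall x v, S x -> beta v <= sqdist (x, v)) ->
  (\int[nu]_v (beta v)%:E <= \int[pi]_z (sqdist z)%:E)%E.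
Proof.
move=> mS muS pi_mu_nu mbeta beta0 beta_le.
rewrite (eq_measure_integral (pushforward pi snd)); last first.
  move=> A mA _; transitivity (pi (setT `*` A)); first by rewrite (pi_mu_nu _ mA).2.
  by congr (pi _); apply/seteqP; split => [[x y] [] /=|[x y] /=].
rewrite ge0_integral_pushforward //; last 2 first.
- exact/measurable_EFinP.
- by move=> v _; rewrite lee_fin.
rewrite preimage_setT; apply: ae_ge0_le_integral => //.
- by move=> z _; rewrite lee_fin.
- by apply/measurable_EFinP; exact: measurableT_comp mbeta measurable_snd.
- by move=> z _; rewrite lee_fin; exact: sqdist_ge0.
- by apply/measurable_EFinP; exact: measurable_sqdist.
exists (~` S `*` setT); split; first exact: measurableX (measurableC mS) _.
  by rewrite -muS; exact: (pi_mu_nu _ (measurableC mS)).1.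
by move=> [x y] /= xy; split => //= Sx; apply: xy => _; rewrite lee_fin beta_le.
Qed.

Section Empirical.
Variable m : nat.
Implicit Types P Q : 'I_m.+1 -> T.

Definition diag_coupling P Q : probability (T * T)%type R := emp (fun a => (P a, Q a)).

Lemma diag_couplingP P Q : is_coupling (emp P) (emp Q) (diag_coupling P Q).
Proof.
move=> A mA; rewrite !empE; split; congr (EFin (_ / _));
  by apply: eq_bigr => a _; rewrite !indicE in_setX in_setT ?andbT.
Qed.

Lemma W2sq_emp_le P Q :
  (W2sq (emp P) (emp Q) <= ((\sum_a sqdist (P a, Q a)) / m.+1%:R)%:E)%E.
Proof.
apply: ereal_inf_lbound; exists (diag_coupling P Q); first exact: diag_couplingP.
by rewrite integral_emp //; exact: measurable_sqdist.
Qed.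

(** This makes the diagonal coupling of [emp P] and [emp Q] optimal. *)
Definition well_matched P Q :=
  forall a b, P a <> P b -> 2 * edist (P b) (Q b) < edist (P a) (P b).

Lemma well_matched_nearest P Q : well_matched P Q ->
  forall a b, sqdist (P b, Q b) <= sqdist (P a, Q b).
Proof.
move=> PQ a b; apply: le_sqdist; have [-> //|neq] := eqVneq (P a) (P b).
have := PQ a b (elimN eqP neq); have := edist_triangle (P a) (Q b) (P b).
rewrite (edistC (Q b)); lra.
Qed.

Definition sqdist_min P (v : T) := \big[Order.min/sqdist (P ord0, v)]_a sqdist (P a, v).

Lemma sqdist_min_le P a v : sqdist_min P v <= sqdist (P a, v).
Proof. exact: bigmin_le. Qed.

Lemma sqdist_min_matched P Q b : well_matched P Q -> sqdist_min P (Q b) = sqdist (P b, Q b).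
Proof.
move=> PQ; apply/eqP; rewrite eq_le sqdist_min_le.
by apply: le_bigmin => [|a _]; exact: well_matched_nearest.
Qed.

Lemma W2sq_emp P Q : well_matched P Q ->
  W2sq (emp P) (emp Q) = ((\sum_a sqdist (P a, Q a)) / m.+1%:R)%:E.
Proof.
move=> PQ; apply/eqP; rewrite eq_le W2sq_emp_le /=.
apply: le_ereal_inf_tmp => _ [pi pi_PQ <-].
have msqdist_min : measurable_fun setT (sqdist_min P).
  apply: measurable_bigmin => [|a];
    exact: measurableT_comp measurable_sqdist (pair1_measurable _).
have <- : (\int[emp Q]_v (sqdist_min P v)%:E)%E =
    ((\sum_a sqdist (P a, Q a)) / m.+1%:R)%:E.
  rewrite integral_emp //; congr (EFin (_ / _)).
  by apply: eq_bigr => a _; exact: sqdist_min_matched.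
apply: (potential_le_coupling_cost (measurable_range_tuple P) _ pi_PQ msqdist_min).
- rewrite empE big1 ?mul0r // => a _; rewrite indicE memNset //=.
  by apply; exists a.
- by move=> v; apply: le_bigmin => [|a _]; exact: sqdist_ge0.
- by move=> _ v [a _ <-]; exact: sqdist_min_le.
Qed.

Lemma W2_emp P Q : well_matched P Q ->
  W2 (emp P) (emp Q) = (fdist P Q / Num.sqrt m.+1%:R)%:E.
Proof.
move=> PQ; rewrite /W2 W2sq_emp //= sqrtrM ?sqrtrV //.
by apply: sumr_ge0 => a _; exact: sqdist_ge0.
Qed.

Lemma well_matched_emp_inj P Q :
  well_matched P Q -> emp P = emp Q :> (set T -> \bar R) -> P = Q.
Proof.
move=> PQ E; apply: contrapT => /fdist_gt0 PQ_gt0.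
have := W2sq_emp_le P P; rewrite [X in W2sq _ X]E W2sq_emp //.
have -> : \sum_a sqdist (P a, P a) = 0 by apply: big1 => a _; exact: sqdist_xx.
by rewrite lee_fin mul0r leNgt divr_gt0 // -sqrtr_gt0.
Qed.

End Empirical.
End Couplings.

Section AttentionOnEmpirical.
Variables (R : realType) (k d : nat) (A : 'M[R]_d) (V : 'M[R]_(k, d)).

Lemma bilE (x y : d.-tuple R) :
  bil A x y = \sum_q (\sum_p tnth x p * A q p) * tnth y q.
Proof.
rewrite /bil mxE; apply: eq_bigr => q _; rewrite !mxE; congr (_ * _).
by apply: eq_bigr => p _; rewrite !mxE.
Qed.

Lemma applyVE (y : d.-tuple R) i : tnth (applyV V y) i = \sum_l V i l * tnth y l.
Proof.
by rewrite /applyV /ofcv tnth_mktuple mxE; apply: eq_bigr => l _; rewrite mxE.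
Qed.

Lemma selfattnE n (X : 'I_n -> d.-tuple R) b i :
  tnth (selfattn A V X b) i =
  \sum_j expR (bil A (X b) (X j)) / (\sum_l expR (bil A (X b) (X l))) *
         tnth (applyV V (X j)) i.
Proof.
rewrite /selfattn /ofcv tnth_mktuple mxE.
under eq_bigr do rewrite summxE mulr_sumr.
rewrite exchange_big; apply: eq_bigr => j _.
rewrite applyVE /Pij mulr_sumr; apply: eq_bigr => l _.
by rewrite !mxE; ring.
Qed.

Lemma measurable_linear_form (c : 'I_d -> R) :
  measurable_fun setT (fun y : d.-tuple R => \sum_q c q * tnth y q).
Proof.
apply: measurable_sum => q; apply: measurable_funM; first exact: measurable_cst.
exact: measurable_tnth.
Qed.

Lemma measurable_expR_bil (x : d.-tuple R) :
  measurable_fun setT (fun y : d.-tuple R => expR (bil A x y)).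
Proof.
under eq_fun do rewrite bilE.
exact: measurableT_comp (@measurable_expR R) (measurable_linear_form _).
Qed.

Lemma Gamma_emp m (P : 'I_m.+1 -> d.-tuple R) b :
  Gamma A V (emp P) (P b) = selfattn A V P b.
Proof.
have mnum i : measurable_fun setT
    (fun y => expR (bil A (P b) y) * tnth (applyV V y) i).
  under eq_fun do rewrite applyVE.
  exact: measurable_funM (measurable_expR_bil _) (measurable_linear_form _).
apply: eq_from_tnth => i.
rewrite selfattnE tnth_mktuple !Rintegral_emp //; last exact: measurable_expR_bil.
under [RHS]eq_bigr do rewrite mulrAC.
have S_gt0 : 0 < \sum_j expR (bil A (P b) (P j)).
  by rewrite (bigD1 b) //= ltr_pwDl ?expR_gt0 // sumr_ge0 // => j _; rewrite ltW ?expR_gt0.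
rewrite -mulr_suml; field.
by rewrite lt0r_neq0 //= addrC natr1 pnatr_eq0.
Qed.

Lemma meanfield_emp m (P : 'I_m.+1 -> d.-tuple R) :
  meanfield A V (emp P) = emp (selfattn A V P).
Proof.
apply: funext => S; rewrite /meanfield /pushforward !empE.
congr (EFin (_ / _)); apply: eq_bigr => a _.
by rewrite !indicE -(Gamma_emp P a).
Qed.

End AttentionOnEmpirical.

Section Paths.
Variables (R : realType) (t : R).

Lemma continuous_sum (I : finType) (F : I -> R -> R) :
  (forall i, {for t, continuous (F i)}) -> {for t, continuous (fun s => \sum_i F i s)}.
Proof. by move=> cF; apply: cvg_big => // [|i _]; [exact: add_continuous | exact: cF]. Qed.

Definition path_continuous n p (W : R -> 'I_n -> p.-tuple R) :=
  forall a j, {for t, continuous (fun s => tnth (W s a) j)}.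

Lemma path_continuous_segm n p (X Y : 'I_n -> p.-tuple R) :
  path_continuous (segm X Y).
Proof.
move=> a j; rewrite (_ : (fun s => _) =
    fun s => tnth (X a) j + s * (tnth (Y a) j - tnth (X a) j)); last first.
  by apply: funext => s; rewrite tnth_mktuple.
apply: continuousD; first exact: cvg_cst.
by apply: continuousM; [exact: cvg_id | exact: cvg_cst].
Qed.

Lemma continuous_edist p (x y : R -> p.-tuple R) :
  (forall j, {for t, continuous (fun s => tnth (x s) j)}) ->
  (forall j, {for t, continuous (fun s => tnth (y s) j)}) ->
  {for t, continuous (fun s => edist (x s) (y s))}.
Proof.
move=> cx cy; apply: continuous_comp; last exact: sqrt_continuous.
by apply: continuous_sum => j; apply: continuousM; apply: continuousB.
Qed.

Lemma well_matched_near m p (W : R -> 'I_m.+1 -> p.-tuple R) :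
  path_continuous W -> \forall s \near t, well_matched (W t) (W s).
Proof.
move=> cW; suff near_ab (ab : 'I_m.+1 * 'I_m.+1) : \forall s \near t,
    W t ab.1 <> W t ab.2 -> 2 * edist (W t ab.2) (W s ab.2) < edist (W t ab.1) (W t ab.2).
  have := @filter_forall _ _ _ (nbhs t) (nbhs_filter t) near_ab.
  by apply: (@filterS _ (nbhs t)) => s Ws a b; exact: (Ws (a, b)).
case: ab => a b /=; have [-> | neq] := eqVneq (W t a) (W t b).
  by apply: (@nearW _ (nbhs t)) => s /(_ erefl).
have dist_b : {for t, continuous (fun s => 2 * edist (W t b) (W s b))}.
  apply: continuousM; first exact: cvg_cst.
  by apply: continuous_edist => j; [exact: cvg_cst | exact: cW].
have gap_ab : 2 * edist (W t b) (W t b) < edist (W t a) (W t b).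
  rewrite /edist sqdist_xx sqrtr0 mulr0 sqrtr_gt0 lt_neqAle sqdist_ge0 andbT eq_sym.
  by apply/eqP => /sqdist_eq0 eq_ab; rewrite eq_ab eqxx in neq.
have := @cvgr_lt _ _ _ (nbhs_filter t) _ _ dist_b _ gap_ab.
by apply: (@filterS _ _ (nbhs_filter t)) => s close_b _.
Qed.

End Paths.

Section SelfAttentionContinuous.
Variables (R : realType) (k d : nat) (A : 'M[R]_d) (V : 'M[R]_(k, d)) (t : R).

Lemma path_continuous_selfattn n (W : R -> 'I_n -> d.-tuple R) :
  path_continuous t W -> path_continuous t (fun s => selfattn A V (W s)).
Proof.
move=> cW b i; rewrite (_ : (fun s => _) = fun s =>
    \sum_j expR (bil A (W s b) (W s j)) / (\sum_l expR (bil A (W s b) (W s l))) *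
           \sum_l V i l * tnth (W s j) l); last first.
  by apply: funext => s; rewrite selfattnE; under eq_bigr do rewrite applyVE.
have cexp j : {for t, continuous (fun s => expR (bil A (W s b) (W s j)))}.
  apply: continuous_comp; last exact: continuous_expR.
  rewrite (_ : (fun s => _) = fun s =>
      \sum_q (\sum_p tnth (W s b) p * A q p) * tnth (W s j) q); last first.
    by apply: funext => s; rewrite bilE.
  apply: continuous_sum => q; apply: continuousM; last exact: cW.
  by apply: continuous_sum => p; apply: continuousM; [exact: cW | exact: cvg_cst].
apply: continuous_sum => j; apply: continuousM; last first.
  by apply: continuous_sum => l; apply: continuousM; [exact: cvg_cst | exact: cW].
apply: continuousM => //; apply: continuousV; last exact: continuous_sum.
by rewrite lt0r_neq0 // (bigD1 b) //= ltr_pwDl ?expR_gt0 // sumr_ge0.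
Qed.

End SelfAttentionContinuous.

Section LocalToGlobal.
Variable R : realType.

(** Continuous induction on [sup [set u | D u 0 <= c * u]]. *)
Lemma local_lipschitz_segment (D : R -> R -> R) (c : R) :
  (forall x y z, D x z <= D x y + D y z) -> (forall x y, D x y = D y x) ->
  (forall t : R, 0 <= t <= 1 ->
     \forall s \near t, 0 <= s <= 1 -> D s t <= c * `|s - t|) ->
  D 1 0 <= c.
Proof.
move=> Dtri Dsym Dnear.
have Dloc (t : R) : 0 <= t <= 1 -> exists2 e, 0 < e &
    forall s, 0 <= s <= 1 -> `|s - t| < e -> D s t <= c * `|s - t|.
  move=> /Dnear /nbhs_ballP [e e0 De]; exists e => // s s01 st.
  by apply: De => //; rewrite /ball /= distrC.
pose A := [set u : R | 0 <= u <= 1 /\ D u 0 <= c * u].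
have A0 : A 0.
  split; first lra.
  have [e e0 De] := Dloc 0 ltac:(lra).
  by have := De 0 ltac:(lra); rewrite subrr normr0 mulr0; apply.
have supA : has_sup A by split; [exists 0 | exists 1 => u [/andP[_ ->]]].
set s := sup A.
have s01 : 0 <= s <= 1.
  by rewrite sup_upper_bound //= ge_sup //; [exists 0 | move=> u [/andP[]]].
have As : A s.
  have [e e0 De] := Dloc s s01.
  have [u [/andP[u0 u1] Du] su] : exists2 u, A u & s - e < u := sup_adherent e0 supA.
  have us : u <= s by apply: (sup_upper_bound supA); split; rewrite ?u0.
  have := De u ltac:(lra); rewrite ler0_norm ?subr_le0 // Dsym => /(_ ltac:(lra)).
  by have := Dtri s u 0; split; [lra | nra].
have s1 : s = 1.
  apply: le_anti; rewrite (andP s01).2 leNgt /=; apply/negP => s_lt1.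
  have [e e0 De] := Dloc s s01.
  pose v := Num.min 1 (s + e / 2).
  have v_le1 : v <= 1 by rewrite ge_min lexx.
  have v_le : v <= s + e / 2 by rewrite ge_min lexx orbT.
  have s_lt_v : s < v by rewrite lt_min s_lt1 ltrDl; lra.
  suff Av : A v by have : v <= s := sup_upper_bound supA Av; lra.
  have := De v ltac:(lra); rewrite gtr0_norm ?subr_gt0 // => /(_ ltac:(lra)).
  by have := Dtri v s 0; case: As => _; split; [lra | nra].
by case: As; rewrite s1 mulr1.
Qed.

End LocalToGlobal.

Section Main.
Variables (R : realType) (r : R) (k d : nat) (A : 'M[R]_d) (V : 'M[R]_(k, d)).
Local Notation f := (selfattn A V).

Lemma W2_ratio_le_LipW2 (F : probability (d.-tuple R) R -> set (k.-tuple R) -> \bar R)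
    (mu nu : probability (d.-tuple R) R) :
  supported_in r mu -> supported_in r nu -> mu <> nu :> (set _ -> \bar R) ->
  (Defs.edivp (W2 (F mu) (F nu)) (W2 mu nu) <= LipW2 r F)%E.
Proof. by move=> smu snu mu_nu; apply: ereal_sup_ubound; right; exists mu, nu. Qed.

Lemma supported_in_emp m (P : 'I_m.+1 -> d.-tuple R) :
  (forall a, ballB r (P a)) -> supported_in r (emp P).
Proof.
move=> Pr; rewrite /supported_in empE big1 ?mul0r // => a _.
by rewrite indicE memNset //= => /(_ (Pr a)).
Qed.

(** Here [W2] between the empirical measures is [fdist / sqrt (m+1)] on
   both sides, so the mean-field bound transfers. *)
Lemma fdist_selfattn_le_matched m (P Q : 'I_m.+1 -> d.-tuple R) (l : R) :
  (LipW2 r (meanfield A V) <= l%:E)%E ->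
  (forall a, ballB r (P a)) -> (forall a, ballB r (Q a)) ->
  well_matched P Q -> well_matched (f P) (f Q) ->
  fdist (f P) (f Q) <= l * fdist P Q.
Proof.
move=> Lip_l Pr Qr PQ fPQ; have [<-|P_Q] := pselect (P = Q).
  by rewrite /fdist !big1 ?sqrtr0 ?mulr0 // => a _; rewrite sqdist_xx.
have emp_PQ : emp P <> emp Q :> (set _ -> \bar R).
  by move=> /(well_matched_emp_inj PQ).
have := W2_ratio_le_LipW2 (meanfield A V) (supported_in_emp Pr) (supported_in_emp Qr) emp_PQ.
move=> /le_trans /(_ Lip_l).
have sqrt_gt0 : 0 < Num.sqrt (m.+1%:R : R) by rewrite sqrtr_gt0.
have PQ_gt0 := fdist_gt0 P_Q.
have cancel_sqrt (a : R) :
    a / Num.sqrt m.+1%:R / (fdist P Q / Num.sqrt m.+1%:R) = a / fdist P Q.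
  by field; rewrite !lt0r_neq0.
by rewrite !meanfield_emp !W2_emp //= lee_fin cancel_sqrt ler_pdivrMr // mulrC.
Qed.

Lemma fdist_selfattn_le n (X Y : 'I_n -> d.-tuple R) (l : R) :
  (LipW2 r (meanfield A V) <= l%:E)%E ->
  (forall a, ballB r (X a)) -> (forall a, ballB r (Y a)) ->
  fdist (f X) (f Y) <= l * fdist X Y.
Proof.
case: n X Y => [|m] X Y Lip_l Xr Yr.
  by rewrite /fdist !big_ord0 sqrtr0 mulr0.
pose Z := segm X Y.
have Zr s a : 0 <= s <= 1 -> ballB r (Z s a) by move=> s01; exact: ballB_convex.
suff : fdist (f (Z 1)) (f (Z 0)) <= l * fdist Y X.
  by rewrite /Z segm1 segm0 fdistC [fdist Y X]fdistC.
apply: (local_lipschitz_segment (D := fun s u => fdist (f (Z s)) (f (Z u)))).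
- by move=> x y z; exact: fdist_triangle.
- by move=> x y; exact: fdistC.
move=> t t01; have cZ : path_continuous t Z by exact: path_continuous_segm.
have := well_matched_near cZ.
have := well_matched_near (path_continuous_selfattn (A := A) (V := V) cZ).
apply: (filterS2 (nbhs_filter t)) => s fZts Zts s01.
rewrite fdistC (le_trans (fdist_selfattn_le_matched Lip_l _ _ Zts fZts)) //.
- by move=> a; exact: Zr.
- by move=> a; exact: Zr.
- by rewrite /Z fdist_segm distrC [fdist Y X]fdistC mulrCA [X in X <= _]mulrC.
Qed.

End Main.

Theorem mainTheorem5 (R : realType) (r : R) (n k d : nat)
  (Q K V : 'M[R]_(k, d)) :
  0 < r ->
  (LipF (selfattn (attnA Q K) V) [set X : 'I_n -> d.-tuple R | forall i, @ballB R d r (X i)]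
   <= LipW2 r (meanfield (attnA Q K) V))%E.
Proof.
move=> _; apply: ge_ereal_sup => _ [-> | [X [Y [Xr Yr X_Y ->]]]].
  by apply: ereal_sup_ubound; left.
case Lip: (LipW2 r (meanfield (attnA Q K) V)) => [l | | ]; last 2 first.
- exact: leey.
- have : (0 <= LipW2 r (meanfield (attnA Q K) V))%E by apply: ereal_sup_ubound; left.
  by rewrite Lip.
rewrite !frob_subX lee_fin ler_pdivrMr ?fdist_gt0 //.
by apply: (fdist_selfattn_le (r := r)) => //; rewrite Lip.
Qed.
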